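(* Assume $f(0)>\frac34$. There exist $U<0$ and constants $0<c\le C$ such that the following holds for every $u_0<U$, every $s\in[0,1]$ and every smooth function $\phi$ on $\overline{\Omega_{u_0}}$ (up to $R=0$): $$c\,I_s(\phi)\le\mathcal E_{\mathcal H_{s,u_0}}(\phi)\le C\,I_s(\phi),$$ where $$I_s(\phi)=\int_{]-\infty,u_0[\times S^2}\Big(u^2(\partial_u\phi)^2+\frac{R}{|u|}(\partial_R\phi)^2+|\nabla_{S^2}\phi|^2\Big)du\,d^2\omega,$$ the integrand being evaluated on $\mathcal H_{s,u_0}$.
   Context: Let $a>0$ and let $f$ be an analytic positive function on $[0,a)$. On a manifold with coordinates $(u,R,\omega)\in\mathbb R\times[0,a)\times S^2$ consider $$\hat g=R^2f(R)\,du^2-2\,du\,dR-d\omega^2,$$ with future null infinity $\mathscr I^+=\{R=0\}$ and the time orientation in which $\partial_u$ is future-directed on $\mathscr I^+$. Put $r=1/R$, fix $r_*$ with $\frac{dr_*}{dr}=\frac1{f(1/r)}$, and set $t=u+r_*$. Regions, for $u_0<0$: - $\Omega_{u_0}=\{t\ge0\}\cap\{u<u_0\}$; - for $0<s\le1$, $\mathcal H_{s,u_0}=\{u=-sr_*\}\cap\{u<u_0\}$; - $\mathcal H_{0,u_0}=\{R=0,\ u<u_0\}$. Each $\mathcal H_{s,u_0}$ is parametrised by $(u,\omega)$. $d^2\omega$ and $\nabla_{S^2}$ are the area form and gradient of the unit sphere. Energy flux. Let $T_{ab}(\phi)=\hat\nabla_a\phi\hat\nabla_b\phi-\frac12\hat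 g^{cd}\hat\nabla_c\phi\hat\nabla_d\phi\,\hat g_{ab}$ and $K=u^2\partial_u-2(1+uR)\partial_R$. The flux $\mathcal E_\Sigma(\phi)=\int_\Sigma K^bT_{ab}(\phi)\tilde n^a\,d\mu$ uses: - a future-directed normal $\tilde n$ to $\Sigma$; - a transverse $\tilde l$ with $\hat g(\tilde l,\tilde n)=1$; - the positive measure $d\mu$ induced by $\tilde l\lrcorner(du\wedge dR\wedge d^2\omega)$. Explicitly, for $0<s\le1$, the integrand being evaluated on $\mathcal H_{s,u_0}$: $$\mathcal E_{\mathcal H_{s,u_0}}(\phi)=\int_{]-\infty,u_0[\times S^2}\Big(R^2u^2f(R)\,\partial_u\phi\,\partial_R\phi+u^2(\partial_u\phi)^2$$ $$+\Big(\frac{R^4u^2f(R)^2}{2s}+R^3f(R)(2-s)\frac us+\frac{R^2f(R)(2-s)}{s}\Big)(\partial_R\phi)^2$$ $$+\Big(\frac{R^2u^2f(R)}{2s}+Ru+1\Big)|\nabla_{S^2}\phi|^2\Big)du\,d^2\omega.$$ For $s=0$: $$\mathcal E_{\mathcal H_{0,u_0}}(\phi)=\int_{]-\infty,u_0[\times S^2}\big(u^2(\partial_u\phi)^2+|\nabla_{S^2}\phi|^2\big)du\,d^2\omega.$$ *)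

From HB Require Import structures.
From mathcomp Require Import all_boot all_order all_algebra.
From mathcomp Require Import all_classical all_reals all_analysis.
Set Implicit Arguments. Unset Strict Implicit. Unset Printing Implicit Defensive.
Import Order.TTheory GRing.Theory Num.Theory.
Import numFieldNormedType.Exports.
Local Open Scope classical_set_scope.
Local Open Scope ring_scope.

Section Defs.
Variable R : realType.

Definition analytic_on_0a (f : R -> R) (a : R) : Prop :=
  forall x0, 0 <= x0 < a ->
    exists2 d : R, 0 < d & exists c : nat -> R,
      forall x, 0 <= x < a -> `|x - x0| < d ->
        (fun n : nat => \sum_(k < n) c k * (x - x0) ^+ k) @ \oo --> f x.

(** Coordinates (u, R, x1, x2, x3) on R^5, omega = (x1,x2,x3) in S^2 embedded
    in R^3.  The unit coordinate vectors. *)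
Definition ev (i : nat) : 'rV[R]_5 := \row_(j < 5) ((j : nat) == i)%:R.

Definition pt (u r w1 w2 w3 : R) : 'rV[R]_5 :=
  \row_(j < 5) [:: u; r; w1; w2; w3]`_j.

Fixpoint Cn (n : nat) (g : 'rV[R]_5 -> R) : Prop :=
  match n with
  | 0 => continuous g
  | n.+1 => (forall (i : nat) x, (i < 5)%N -> derivable g x (ev i)) /\
            (forall i : nat, (i < 5)%N -> Cn n (fun x => 'D_(ev i) g x))
  end.
Definition smooth (g : 'rV[R]_5 -> R) : Prop := forall n, Cn n g.

Definition d_u (phi : 'rV[R]_5 -> R) u r w1 w2 w3 := 'D_(ev 0) phi (pt u r w1 w2 w3).
Definition d_R (phi : 'rV[R]_5 -> R) u r w1 w2 w3 := 'D_(ev 1) phi (pt u r w1 w2 w3).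

(** |grad_{S^2} phi|^2 at a point with omega = (w1,w2,w3) on the unit sphere:
    squared norm of the tangential projection of the ambient R^3-gradient. *)
Definition grad_S2_sq (phi : 'rV[R]_5 -> R) u r w1 w2 w3 : R :=
  let g1 := 'D_(ev 2) phi (pt u r w1 w2 w3) in
  let g2 := 'D_(ev 3) phi (pt u r w1 w2 w3) in
  let g3 := 'D_(ev 4) phi (pt u r w1 w2 w3) in
  g1 ^+ 2 + g2 ^+ 2 + g3 ^+ 2 - (w1 * g1 + w2 * g2 + w3 * g3) ^+ 2.

(** Integral over ]-oo,u0[ x S^2 with respect to du d^2omega; the sphere is
    parametrised by spherical coordinates, d^2omega = sin th dth dph. *)
Definition int_u_S2 (u0 : R) (G : R -> R -> R -> R -> R) : \bar R :=
  (\int[lebesgue_measure]_(u in [set u : R | (u < u0)%R])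
    (\int[lebesgue_measure]_(th in [set th : R | (0 <= th <= pi)%R])
      (\int[lebesgue_measure]_(ph in [set ph : R | (0 <= ph <= 2 * pi)%R])
         ((G u (sin th * cos ph) (sin th * sin ph) (cos th) * sin th)%R)%:E)))%E.

(** Energy flux density through H_{s,u0} (explicit formulas of the paper);
    r is the R-coordinate of the point of H_{s,u0} above u. *)
Definition E_dens (f : R -> R) (s u r du dR g : R) : R :=
  if s == 0 then u ^+ 2 * du ^+ 2 + g
  else r ^+ 2 * u ^+ 2 * f r * du * dR + u ^+ 2 * du ^+ 2
     + (r ^+ 4 * u ^+ 2 * (f r) ^+ 2 / (2 * s)
        + r ^+ 3 * f r * (2 - s) * u / s
        + r ^+ 2 * f r * (2 - s) / s) * dR ^+ 2
     + (r ^+ 2 * u ^+ 2 * f r / (2 * s) + r * u + 1) * g.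

Definition I_dens (u r du dR g : R) : R :=
  u ^+ 2 * du ^+ 2 + r / `|u| * dR ^+ 2 + g.

Definition energy (f : R -> R) (s u0 : R) (Rs : R -> R) (phi : 'rV[R]_5 -> R) :=
  int_u_S2 u0 (fun u w1 w2 w3 =>
    E_dens f s u (Rs u) (d_u phi u (Rs u) w1 w2 w3) (d_R phi u (Rs u) w1 w2 w3)
      (grad_S2_sq phi u (Rs u) w1 w2 w3)).

Definition I_norm (u0 : R) (Rs : R -> R) (phi : 'rV[R]_5 -> R) :=
  int_u_S2 u0 (fun u w1 w2 w3 =>
    I_dens u (Rs u) (d_u phi u (Rs u) w1 w2 w3) (d_R phi u (Rs u) w1 w2 w3)
      (grad_S2_sq phi u (Rs u) w1 w2 w3)).

(** Rs parametrises H_{s,u0} = {u = - s r_*} /\ {u < u0} (s > 0), resp.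
    H_{0,u0} = {R = 0, u < u0}. *)
Definition H_param (a : R) (rstar : R -> R) (s u0 : R) (Rs : R -> R) : Prop :=
  if s == 0 then forall u, u < u0 -> Rs u = 0
  else forall u, u < u0 -> 0 < Rs u < a /\ u = - s * rstar (Rs u)^-1.

End Defs.

From HB Require Import structures.
From mathcomp Require Import all_boot all_order all_algebra.
From mathcomp Require Import all_classical all_reals all_analysis.
From mathcomp Require Import ring lra.
Import Order.TTheory GRing.Theory Num.Theory.
Import numFieldNormedType.Exports.
Local Open Scope classical_set_scope.
Local Open Scope ring_scope.
Set Implicit Arguments. Unset Strict Implicit. Unset Printing Implicit Defensive.

(** On H_{s,u0} with s > 0 put k = R r_*(1/R) and p = k f(R), so that R |u| = s k.
    In the variables V = |u| d_u phi and Z = d_R phi / |u| both flux densities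
    become a quadratic form in (V, Z) plus a multiple of |grad_{S^2} phi|^2, with
    coefficients depending only on (s, k, p).  Far out on H (u -> -oo) we have
    R -> 0, hence p -> 1 and, by the mean value theorem and the continuity of the
    analytic f at 0, k -> 1/f(0) < 4/3.  For k < 4/3 the discriminant of the
    energy form stays bounded away from 0 uniformly in s in (0, 1], so the two
    densities are comparable pointwise with constants independent of s, u and phi;
    integrating gives the claim.  For s = 0 the two densities coincide. *)

(* The library's monotonicity and homogeneity lemmas assume measurability; the
   integrands below need not be measurable, since nothing is assumed about Rs. *)
Section NonnegIntegral.
Local Open Scope ereal_scope.
Context d (T : measurableType d) (R : realType) (mu : {measure set T -> \bar R}).
Import HBNNSimple.

Lemma ge0_le_integral_nm (D : set T) (f g : T -> \bar R) :
  (forall x, D x -> 0 <= f x) -> (forall x, D x -> f x <= g x) ->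
  \int[mu]_(x in D) f x <= \int[mu]_(x in D) g x.
Proof.
move=> f_ge0 fg.
have g_ge0 x : D x -> 0 <= g x by move=> Dx; exact: le_trans (f_ge0 x Dx) (fg x Dx).
rewrite !ge0_integralE //; apply: ereal_sup_le => _ [h /= hf <-].
exists h => //= x; apply: le_trans (hf x) _.
by rewrite /patch; case: ifP => // /set_mem Dx; exact: fg.
Qed.

Lemma ge0_integralZl_nm (D : set T) (f : T -> \bar R) (k : R) : (0 < k)%R ->
  (forall x, D x -> 0 <= f x) ->
  \int[mu]_(x in D) (k%:E * f x) = k%:E * \int[mu]_(x in D) f x.
Proof.
move=> k_gt0 f_ge0.
have kf_ge0 x : D x -> 0 <= k%:E * f x by move=> Dx; rewrite mule_ge0 ?f_ge0 // lee_fin ltW.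
have patch_cases (F : T -> \bar R) (h : {nnsfun T >-> R}) x :
    (h x)%:E <= (F \_ D) x -> h x = 0%R \/ D x /\ (h x)%:E <= F x.
  rewrite /patch; case: ifP => [/set_mem Dx hF|_ h_le0]; [by right | left].
  by apply/le_anti; rewrite fun_ge0 -lee_fin h_le0.
rewrite !ge0_integralE // -ereal_supZl; last 2 first.
- apply/set0P; exists 0; exists nnsfun0; last exact: sintegral0.
  by move=> x; exact: erestrict_ge0.
- exact: ltW.
congr ereal_sup; apply/seteqP; split => z /=.
- move=> [h /= hf <-].
  have kV_ge0 : (0 <= k^-1)%R by rewrite invr_ge0 ltW.
  exists (sintegral mu (scale_nnsfun h kV_ge0)).
    exists (scale_nnsfun h kV_ge0) => //= x.
    have [->|[Dx hx]] := patch_cases _ h x (hf x).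
      by rewrite mulr0; exact: erestrict_ge0.
    rewrite /patch mem_set // EFinM; apply: le_trans (lee_wpmul2l _ hx) _.
      by rewrite lee_fin.
    by rewrite muleA -EFinM mulVf ?mul1e // lt0r_neq0.
  by rewrite sintegralrM muleA -EFinM mulfV ?mul1e // lt0r_neq0.
- move=> [_ [h /= hf <-] <-].
  exists (scale_nnsfun h (ltW k_gt0)); last exact: sintegralrM.
  move=> x /=; have [->|[Dx hx]] := patch_cases _ h x (hf x).
    by rewrite mulr0; exact: erestrict_ge0.
  by rewrite /patch mem_set // EFinM lee_wpmul2l // lee_fin ltW.
Qed.

End NonnegIntegral.

Section SphereIntegral.
Context {R : realType}.
Local Notation on_S2 w1 w2 w3 := (w1 ^+ 2 + w2 ^+ 2 + w3 ^+ 2 = 1 :> R).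

Lemma sphere_coord_norm (th ph : R) :
  on_S2 (sin th * cos ph) (sin th * sin ph) (cos th).
Proof. by rewrite !exprMn -mulrDr cos2Dsin2 mulr1 addrC cos2Dsin2. Qed.

Lemma sqr_dot_le_unit (w1 w2 w3 g1 g2 g3 : R) : on_S2 w1 w2 w3 ->
  (w1 * g1 + w2 * g2 + w3 * g3) ^+ 2 <= g1 ^+ 2 + g2 ^+ 2 + g3 ^+ 2.
Proof.
move=> w_unit; rewrite -subr_ge0.
have -> : g1 ^+ 2 + g2 ^+ 2 + g3 ^+ 2 - (w1 * g1 + w2 * g2 + w3 * g3) ^+ 2 =
    (w1 * g2 - w2 * g1) ^+ 2 + (w1 * g3 - w3 * g1) ^+ 2 + (w2 * g3 - w3 * g2) ^+ 2.
  by rewrite -[X in X - _]mul1r -w_unit; ring.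
by rewrite !addr_ge0 // sqr_ge0.
Qed.

Lemma grad_S2_sq_ge0 (phi : 'rV[R]_5 -> R) u r w1 w2 w3 : on_S2 w1 w2 w3 ->
  0 <= grad_S2_sq phi u r w1 w2 w3.
Proof. by move=> /sqr_dot_le_unit dot_le; rewrite /grad_S2_sq subr_ge0 dot_le. Qed.

Lemma int_u_S2_le (u0 : R) (G1 G2 : R -> R -> R -> R -> R) :
  (forall u w1 w2 w3, u < u0 -> on_S2 w1 w2 w3 -> 0 <= G1 u w1 w2 w3 <= G2 u w1 w2 w3) ->
  (int_u_S2 u0 G1 <= int_u_S2 u0 G2)%E.
Proof.
move=> G12; have G1_ge0 u th ph : u < u0 -> 0 <= th <= pi ->
    (0 <= (G1 u (sin th * cos ph) (sin th * sin ph) (cos th) * sin th)%:E)%E.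
  move=> uu0 th_in; rewrite lee_fin mulr_ge0 ?sin_ge0_pi //.
  by have /andP[] := G12 _ _ _ _ uu0 (sphere_coord_norm th ph).
apply: ge0_le_integral_nm => [u /= uu0|u /= uu0].
  by apply: integral_ge0 => th /= th_in; apply: integral_ge0 => ph _; exact: G1_ge0.
apply: ge0_le_integral_nm => [th /= th_in|th /= th_in].
  by apply: integral_ge0 => ph _; exact: G1_ge0.
apply: ge0_le_integral_nm => [ph _|ph _]; first exact: G1_ge0.
rewrite lee_fin ler_wpM2r ?sin_ge0_pi //.
by have /andP[] := G12 _ _ _ _ uu0 (sphere_coord_norm th ph).
Qed.

Lemma int_u_S2_Zl (u0 k : R) (G : R -> R -> R -> R -> R) : 0 < k ->
  (forall u w1 w2 w3, u < u0 -> on_S2 w1 w2 w3 -> 0 <= G u w1 w2 w3) ->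
  int_u_S2 u0 (fun u w1 w2 w3 => k * G u w1 w2 w3) = (k%:E * int_u_S2 u0 G)%E.
Proof.
move=> k_gt0 G_ge0; have G_ge0' u th ph : u < u0 -> 0 <= th <= pi ->
    (0 <= (G u (sin th * cos ph) (sin th * sin ph) (cos th) * sin th)%:E)%E.
  by move=> uu0 th_in; rewrite lee_fin mulr_ge0 ?sin_ge0_pi ?G_ge0 ?sphere_coord_norm.
rewrite /int_u_S2 -ge0_integralZl_nm //; last first.
  move=> u /= uu0; apply: integral_ge0 => th /= th_in.
  by apply: integral_ge0 => ph _; exact: G_ge0'.
apply: eq_integral => u /[1!inE] /= uu0; rewrite -ge0_integralZl_nm //; last first.
  by move=> th /= th_in; apply: integral_ge0 => ph _; exact: G_ge0'.
apply: eq_integral => th /[1!inE] /= th_in; rewrite -ge0_integralZl_nm //; last first.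
  by move=> ph _; exact: G_ge0'.
by apply: eq_integral => ph _; rewrite -EFinM mulrA.
Qed.

Lemma int_u_S2_sandwich (u0 c C : R) (G H : R -> R -> R -> R -> R) : 0 < c -> 0 < C ->
  (forall u w1 w2 w3, u < u0 -> on_S2 w1 w2 w3 ->
     [/\ 0 <= G u w1 w2 w3, c * G u w1 w2 w3 <= H u w1 w2 w3
        & H u w1 w2 w3 <= C * G u w1 w2 w3]) ->
  (c%:E * int_u_S2 u0 G <= int_u_S2 u0 H)%E /\ (int_u_S2 u0 H <= C%:E * int_u_S2 u0 G)%E.
Proof.
move=> c_gt0 C_gt0 GH.
have G_ge0 u w1 w2 w3 : u < u0 -> on_S2 w1 w2 w3 -> 0 <= G u w1 w2 w3.
  by move=> u_lt w_unit; case: (GH u w1 w2 w3 u_lt w_unit).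
rewrite -(int_u_S2_Zl c_gt0 G_ge0) -(int_u_S2_Zl C_gt0 G_ge0).
split; apply: int_u_S2_le => u w1 w2 w3 u_lt w_unit;
  have [G0 lb ub] := GH u w1 w2 w3 u_lt w_unit; apply/andP; split => //.
- by rewrite mulr_ge0 // ltW.
- exact: le_trans (mulr_ge0 (ltW c_gt0) G0) lb.
Qed.

End SphereIntegral.

Section FluxForm.
Context {R : realFieldType}.

Lemma quad_form_ge0 (a b d V Z : R) : 0 < a -> b ^+ 2 <= 4 * a * d ->
  0 <= a * V ^+ 2 + b * V * Z + d * Z ^+ 2.
Proof.
move=> a_gt0 discr.
have : 0 <= 4 * a * (a * V ^+ 2 + b * V * Z + d * Z ^+ 2).
  have -> : 4 * a * (a * V ^+ 2 + b * V * Z + d * Z ^+ 2) =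
            (2 * a * V + b * Z) ^+ 2 + (4 * a * d - b ^+ 2) * Z ^+ 2 by ring.
  by rewrite addr_ge0 ?sqr_ge0 // mulr_ge0 ?sqr_ge0 ?subr_ge0.
by rewrite pmulr_rge0 //; lra.
Qed.

(* E_dens and I_dens on H_{s,u0} in the variables V = |u| d_u phi and
   Z = d_R phi / |u|, with k = R r_*(1/R) and p = k f(R), so that R |u| = s k. *)
Definition flux_Q (s k p : R) := s ^+ 2 * k * p / 2 - (2 - s) * s * k + (2 - s).
Definition flux_B (s k p : R) := s * k * p / 2 - s * k + 1.

Definition flux_form (s k p V Z g : R) :=
  V ^+ 2 + s ^+ 2 * k * p * V * Z + s * k * p * flux_Q s k p * Z ^+ 2 + flux_B s k p * g.
Definition ref_form (s k V Z g : R) := V ^+ 2 + s * k * Z ^+ 2 + g.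

Definition flux_admissible (s k p mu : R) :=
  [/\ 0 < s <= 1, 0 < k <= 4 / 3 - mu, 0 < mu <= 2 / 3 & `|p - 1| <= mu / 4].

Variables (s k p mu : R).
Hypothesis adm : flux_admissible s k p mu.

Let p_bounds : 5 / 6 <= p <= 7 / 6.
Proof.
case: adm => _ _ /andP[_ mu_le]; rewrite ler_norml => /andP[p_lb p_ub].
by apply/andP; split; lra.
Qed.

Let sk_bounds n : 0 <= s ^+ n.+1 * k <= 4 / 3.
Proof.
case: adm => /andP[s_gt0 s_le1] /andP[k_gt0 k_le] /andP[mu_gt0 _] _.
have sn_le1 : s ^+ n.+1 <= 1 by rewrite expr_le1 // ltW.
rewrite mulr_ge0 ?exprn_ge0 ?(ltW s_gt0) ?(ltW k_gt0) //=.
by rewrite (le_trans (y := 1 * k)) ?ler_wpM2r ?(ltW k_gt0) // mul1r; lra.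
Qed.

Lemma flux_discr_margin : mu / 3 <= p * flux_Q s k p - s ^+ 3 * k * p ^+ 2 / 4.
Proof.
case: adm => /andP[s_gt0 s_le1] /andP[k_gt0 k_le] /andP[mu_gt0 mu_le].
rewrite ler_norml => /andP[p_lb' p_ub']; have /andP[p_lb p_ub] := p_bounds.
pose phi := s * (2 - 3 / 2 * s + s ^+ 2 / 4).
have phi_ge : 3 / 4 * s <= phi.
  rewrite -subr_ge0 (_ : _ - _ = s * (1 - s) * (5 - s) / 4); last by rewrite /phi; field.
  by rewrite divr_ge0 // !mulr_ge0 //; lra.
(* The margin 2 - s - k phi vanishes at s = 1, k = 4/3: hence the threshold f(0) > 3/4. *)
have main : 3 / 4 * mu <= 2 - s - k * phi.
  have -> : 2 - s - k * phi =
      (1 - s) * (2 - s) * (3 - s) / 3 + (4 / 3 - k) * phi by rewrite /phi; field.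
  have : 2 * (1 - s) / 3 <= (1 - s) * (2 - s) * (3 - s) / 3.
    rewrite -subr_ge0 (_ : _ - _ = (1 - s) ^+ 2 * (4 - s) / 3); last by field.
    by rewrite divr_ge0 // mulr_ge0 ?sqr_ge0 //; lra.
  have : mu * phi <= (4 / 3 - k) * phi by rewrite ler_wpM2r //; nra.
  have : mu * (3 / 4 * s) <= mu * phi by rewrite ler_wpM2l //; lra.
  have : mu * (1 - s) <= 2 / 3 * (1 - s) by rewrite ler_wpM2r //; lra.
  lra.
set w := s ^+ 2 * k * (1 / 2 - s / 4).
have s2_le1 : s ^+ 2 <= 1 by rewrite expr_le1 //; lra.
have w_ge0 : 0 <= w by rewrite !mulr_ge0 ?sqr_ge0 //; lra.
have w_le : w <= 2 / 3.
  have s2k_le : s ^+ 2 * k <= 1 * (4 / 3) by rewrite ler_pM ?sqr_ge0 //; lra.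
  rewrite /w (le_trans (y := 4 / 3 * (1 / 2))) //; last by lra.
  by rewrite ler_pM ?mulr_ge0 ?sqr_ge0 //; lra.
have : - (mu / 4) * w <= (p - 1) * w by rewrite ler_wpM2r.
have : mu / 4 * w <= mu / 4 * (2 / 3) by rewrite ler_wpM2l //; lra.
have -> : p * flux_Q s k p - s ^+ 3 * k * p ^+ 2 / 4 =
    p * (2 - s - k * phi + (p - 1) * w).
  by rewrite /flux_Q /phi /w; field.
nra.
Qed.

Lemma flux_pQ_le : p * flux_Q s k p <= 4.
Proof.
case: adm => /andP[s_gt0 s_le1] _ _ _.
have /andP[p_lb p_ub] := p_bounds.
have /andP[sk_ge0 sk_le] := sk_bounds 0; have /andP[s2k_ge0 s2k_le] := sk_bounds 1.
rewrite expr1 in sk_ge0 sk_le.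
have Q_le : flux_Q s k p <= 25 / 9.
  have -> : flux_Q s k p = 2 - s - (2 - s) * (s * k) + s ^+ 2 * k * p / 2.
    by rewrite /flux_Q; ring.
  have : 0 <= (2 - s) * (s * k) by rewrite mulr_ge0 //; lra.
  nra.
nra.
Qed.

Lemma flux_B_bounds : 2 / 9 <= flux_B s k p <= 1.
Proof.
have /andP[p_lb p_ub] := p_bounds.
have /andP[sk_ge0 sk_le] := sk_bounds 0; rewrite expr1 in sk_ge0 sk_le.
have -> : flux_B s k p = 1 - s * k * (1 - p / 2) by rewrite /flux_B; ring.
by apply/andP; split; nra.
Qed.

Lemma flux_cross_le : s ^+ 3 * k * p ^+ 2 <= 2.
Proof.
have /andP[p_lb p_ub] := p_bounds.
have /andP[s3k_ge0 s3k_le] := sk_bounds 2.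
have : p ^+ 2 <= 49 / 36 by nra.
nra.
Qed.

Lemma flux_form_lb V Z g : 0 <= g -> mu / 15 * ref_form s k V Z g <= flux_form s k p V Z g.
Proof.
case: adm => /andP[s_gt0 _] /andP[k_gt0 _] /andP[mu_gt0 mu_le] _ g_ge0.
rewrite -subr_ge0; set c := mu / 15.
have -> : flux_form s k p V Z g - c * ref_form s k V Z g =
    (1 - c) * V ^+ 2 + s ^+ 2 * k * p * V * Z + s * k * (p * flux_Q s k p - c) * Z ^+ 2
    + (flux_B s k p - c) * g by rewrite /flux_form /ref_form; ring.
have /andP[B_lb _] := flux_B_bounds.
rewrite addr_ge0 ?mulr_ge0 //; last by rewrite /c; lra.
apply: quad_form_ge0; first by rewrite /c; lra.
have -> : (s ^+ 2 * k * p) ^+ 2 = s * k * (s ^+ 3 * k * p ^+ 2) by ring.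
have -> : 4 * (1 - c) * (s * k * (p * flux_Q s k p - c)) =
    s * k * (4 * (1 - c) * (p * flux_Q s k p - c)) by ring.
rewrite ler_wpM2l ?mulr_ge0 ?(ltW s_gt0) ?(ltW k_gt0) //.
have := flux_discr_margin; have := flux_pQ_le; rewrite /c; nra.
Qed.

Lemma flux_form_ub V Z g : 0 <= g -> flux_form s k p V Z g <= 5 * ref_form s k V Z g.
Proof.
case: adm => /andP[s_gt0 _] /andP[k_gt0 _] _ _ g_ge0.
rewrite -subr_ge0.
have -> : 5 * ref_form s k V Z g - flux_form s k p V Z g =
    4 * V ^+ 2 + (- (s ^+ 2 * k * p)) * V * Z + s * k * (5 - p * flux_Q s k p) * Z ^+ 2
    + (5 - flux_B s k p) * g by rewrite /flux_form /ref_form; ring.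
have /andP[_ B_ub] := flux_B_bounds.
rewrite addr_ge0 ?mulr_ge0 //; last by lra.
apply: quad_form_ge0; first by lra.
have -> : (- (s ^+ 2 * k * p)) ^+ 2 = s * k * (s ^+ 3 * k * p ^+ 2) by ring.
have -> : 4 * 4 * (s * k * (5 - p * flux_Q s k p)) =
    s * k * (16 * (5 - p * flux_Q s k p)) by ring.
rewrite ler_wpM2l ?mulr_ge0 ?(ltW s_gt0) ?(ltW k_gt0) //.
have := flux_cross_le; have := flux_pQ_le; lra.
Qed.

End FluxForm.

Section FluxDensity.
Context {R : realType}.

Lemma E_dens_flux_form (f : R -> R) (s u r k X Y g : R) :
  s != 0 -> u < 0 -> r * - u = s * k ->
  E_dens f s u r X Y g = flux_form s k (k * f r) (- u * X) (Y / - u) g.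
Proof.
move=> s_neq0 u_lt0 ru; have u_neq0 : u != 0 by rewrite ltr0_neq0.
have -> : r = s * k / - u by rewrite -ru mulfK // oppr_eq0.
by rewrite /E_dens (negbTE s_neq0) /flux_form /flux_Q /flux_B; field; rewrite u_neq0.
Qed.

Lemma I_dens_ref_form (s u r k X Y g : R) :
  u < 0 -> r * - u = s * k -> I_dens u r X Y g = ref_form s k (- u * X) (Y / - u) g.
Proof.
move=> u_lt0 ru; have u_neq0 : u != 0 by rewrite ltr0_neq0.
have -> : r = s * k / - u by rewrite -ru mulfK // oppr_eq0.
by rewrite /I_dens /ref_form ltr0_norm //; field.
Qed.

Lemma I_dens_ge0 (u r X Y g : R) : 0 <= r -> 0 <= g -> 0 <= I_dens u r X Y g.
Proof.
move=> r_ge0 g_ge0; rewrite /I_dens; apply: addr_ge0 => //.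
by apply: addr_ge0; rewrite mulr_ge0 ?sqr_ge0 ?divr_ge0.
Qed.

End FluxDensity.

Definition right_cont_at0 {R : realType} (f : R -> R) :=
  forall e, 0 < e -> exists2 d, 0 < d & forall x, 0 <= x < d -> `|f x - f 0| <= e.

Section PowerSeriesNearZero.
Context {R : realType}.

Lemma sum_exprV2_le2 n : \sum_(k < n) (2^-1 : R) ^+ k <= 2.
Proof.
suff -> : \sum_(k < n) (2^-1 : R) ^+ k = 2 - 2 * 2^-1 ^+ n.
  by rewrite lerBlDr lerDl mulr_ge0 ?exprn_ge0.
elim: n => [|n IH]; first by rewrite big_ord0 expr0 mulr1 subrr.
by rewrite big_ord_recr /= IH exprS; field.
Qed.

Lemma pseries_terms_bounded (c : nat -> R) (h : R) : 0 <= h ->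
  cvgn (fun n => \sum_(k < n) c k * h ^+ k) -> exists M, forall k, `|c k| * h ^+ k <= M.
Proof.
move=> h_ge0 cvg_sum.
have cvg_series : cvgn (series (fun k => c k * h ^+ k)).
  suff -> : series (fun k => c k * h ^+ k) = fun n => \sum_(k < n) c k * h ^+ k by [].
  by apply/funext => n; rewrite /series /= big_mkord.
have /cvg_seq_bounded [M [_ M_ub]] : cvgn (fun k => c k * h ^+ k).
  exact: cvgP (cvg_series_cvg_0 cvg_series).
exists (M + 1) => k; rewrite -[h]ger0_norm // -normrX -normrM.
by apply: M_ub => //; lra.
Qed.

Lemma pseries_sub_const_le (c : nat -> R) (h M x : R) n : 0 < h ->
  (forall k, `|c k| * h ^+ k <= M) -> 0 <= x <= h / 2 ->
  `|\sum_(k < n) c k * x ^+ k - \sum_(k < n) c k * 0 ^+ k| <= 4 * M * (x / h).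
Proof.
move=> h_gt0 c_bd /andP[x_ge0 x_le]; set q := x / h.
have q_ge0 : 0 <= q by rewrite divr_ge0 // ltW.
have q_le : q <= 2^-1 by rewrite ler_pdivrMr //; lra.
have x_eq : x = q * h by rewrite /q divfK // lt0r_neq0.
clearbody q.
have M_ge0 : 0 <= M by apply: le_trans (c_bd 0%N); rewrite expr0 mulr1.
have Mq_ge0 : 0 <= 2 * M * q by rewrite !mulr_ge0.
rewrite -sumrB (le_trans (ler_norm_sum _ _ _)) //.
apply: (le_trans (y := \sum_(k < n) 2 * M * q * 2^-1 ^+ k)); last first.
  rewrite -mulr_sumr (_ : 4 * M * q = 2 * M * q * 2); last by ring.
  by rewrite ler_wpM2l // sum_exprV2_le2.
apply: ler_sum => -[[|k] _] _ /=.
  by rewrite !expr0 subrr normr0 mulr1.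
rewrite x_eq expr0n /= mulr0 subr0 normrM normrX (ger0_norm (mulr_ge0 q_ge0 (ltW h_gt0))).
have -> : `|c k.+1| * (q * h) ^+ k.+1 = (`|c k.+1| * h ^+ k.+1) * (q * q ^+ k).
  by rewrite exprMn exprS; ring.
have -> : 2 * M * q * 2^-1 ^+ k.+1 = M * (q * 2^-1 ^+ k) by rewrite exprS; field.
apply: ler_pM; rewrite ?mulr_ge0 ?exprn_ge0 ?(ltW h_gt0) //.
by rewrite ler_wpM2l // lerXn2r ?nnegrE //; lra.
Qed.

Lemma analytic_on_0a_right_cont0 (a : R) (f : R -> R) :
  0 < a -> analytic_on_0a f a -> right_cont_at0 f.
Proof.
move=> a_gt0 /(_ 0); rewrite lexx a_gt0 => /(_ isT) [d d_gt0 [c series_cvg]] e e_gt0.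
have sum_cvg x : 0 <= x < a -> x < d ->
    (fun n => \sum_(k < n) c k * x ^+ k) @ \oo --> f x.
  move=> /[dup] xa /andP[x_ge0 _]; have := series_cvg x xa.
  by rewrite subr0 ger0_norm.
pose h := Num.min d a / 2.
have h_gt0 : 0 < h by rewrite divr_gt0 // lt_min d_gt0 a_gt0.
have [h_lt_d h_lt_a] : h < d /\ h < a.
  have m_le_d : Num.min d a <= d by rewrite ge_min lexx.
  have m_le_a : Num.min d a <= a by rewrite ge_min lexx orbT.
  by move: h_gt0; rewrite /h; split; lra.
clearbody h.
have [M c_bd] : exists M, forall k, `|c k| * h ^+ k <= M.
  apply: pseries_terms_bounded (ltW h_gt0) _; apply: cvgP (sum_cvg h _ h_lt_d).
  by rewrite (ltW h_gt0) h_lt_a.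
have M_ge0 : 0 <= M by apply: le_trans (c_bd 0%N); rewrite expr0 mulr1.
exists (Num.min (h / 2) (e * h / (4 * (M + 1)))).
  by rewrite lt_min; apply/andP; split; apply: divr_gt0; rewrite ?mulr_gt0 //; lra.
move=> x /andP[x_ge0]; rewrite lt_min => /andP[x_lt_h2 x_lt].
have cvg_diff : (fun n => `|\sum_(k < n) c k * x ^+ k - \sum_(k < n) c k * 0 ^+ k|)
    @ \oo --> `|f x - f 0|.
  have x_in : 0 <= x < a by rewrite x_ge0 /=; lra.
  have zero_in : 0 <= (0 : R) < a by rewrite lexx a_gt0.
  apply: cvg_norm; apply: cvgB; [apply: sum_cvg x_in _; lra | exact: sum_cvg zero_in d_gt0].
apply: (cvgr_to_le cvg_diff); apply: nearW => n /=.
have x_small : 0 <= x <= h / 2 by rewrite x_ge0 /=; lra.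
apply: le_trans (pseries_sub_const_le n h_gt0 c_bd x_small) _.
have M4_gt0 : 0 < 4 * (M + 1) by lra.
move: x_lt; rewrite ltr_pdivlMr // mulrA ler_pdivrMr //; lra.
Qed.

End PowerSeriesNearZero.

Section ClosenessBounds.
Context {R : realFieldType}.

Lemma inv_dist_le (m F : R) : 0 < m -> `|F - m| <= m / 2 ->
  `|F^-1 - m^-1| <= 2 * `|F - m| / m ^+ 2.
Proof.
move=> m_gt0 close; have := close; rewrite ler_norml => /andP[lb _].
have F_gt0 : 0 < F by lra.
have -> : `|F^-1 - m^-1| = `|F - m| * (F * m)^-1.
  have -> : F^-1 - m^-1 = - (F - m) / (F * m) by field; rewrite !lt0r_neq0.
  by rewrite normrM normrN normfV (gtr0_norm (mulr_gt0 F_gt0 m_gt0)).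
have -> : 2 * `|F - m| / m ^+ 2 = `|F - m| * (m ^+ 2 / 2)^-1.
  by rewrite invf_div; ring.
rewrite ler_wpM2l // lef_pV2 ?posrE ?mulr_gt0 ?divr_gt0 ?exprn_gt0 //.
by rewrite expr2 mulrAC ler_wpM2r ?(ltW m_gt0) //; lra.
Qed.

Lemma mul_dist_le (k k0 F F0 eta : R) : `|k - k0| <= eta -> `|F - F0| <= eta -> eta <= 1 ->
  `|k * F - k0 * F0| <= eta * (`|F0| + 1 + `|k0|).
Proof.
move=> k_close F_close eta_le1.
have -> : k * F - k0 * F0 = (k - k0) * F + k0 * (F - F0) by ring.
have F_le : `|F| <= `|F0| + 1.
  by rewrite -[F](subrK F0) (le_trans (ler_normD _ _)) // addrC lerD2l (le_trans F_close).
rewrite (le_trans (ler_normD _ _)) // !normrM.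
have : `|k - k0| * `|F| <= eta * (`|F0| + 1) by rewrite ler_pM.
have : `|k0| * `|F - F0| <= `|k0| * eta by rewrite ler_wpM2l.
nra.
Qed.

End ClosenessBounds.

Section DerivativeRatio.
Context {R : realType}.

Lemma is_derive_continuous_itv (g D : R -> R) (x y : R) :
  (forall z, x <= z -> is_derive z 1 g (D z)) -> {within `[x, y], continuous g}.
Proof.
move=> g_der; apply: derivable_within_continuous => z; rewrite in_itv /= => /andP[xz _].
by have := g_der z xz => /@ex_derive.
Qed.

Lemma derive_ratio_asym (g D : R -> R) (L e rho0 : R) : 0 < e ->
  (forall z, rho0 < z -> is_derive z 1 g (D z)) ->
  (forall z, rho0 < z -> `|D z - L| <= e) ->
  exists rho1, forall rho, rho1 <= rho -> `|g rho / rho - L| <= 2 * e.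
Proof.
move=> e_gt0 g_der D_close.
pose x0 := Num.max rho0 0 + 1.
have [rho0_lt x0_gt0] : rho0 < x0 /\ 0 < x0.
  have : rho0 <= Num.max rho0 0 by rewrite le_max lexx.
  have : 0 <= Num.max rho0 0 by rewrite le_max lexx orbT.
  by rewrite /x0; split; lra.
pose A := g x0 - L * x0.
exists (x0 + 1 + `|A| / e) => rho rho_ge.
have A_ge0 : 0 <= `|A| / e by rewrite divr_ge0 // ltW.
have x0_lt : x0 < rho by lra.
have rho_gt0 : 0 < rho by lra.
have g_der_in z : z \in `]x0, rho[ -> is_derive z 1 g (D z).
  by rewrite in_itv /= => /andP[x0_lt_z _]; apply: g_der; exact: lt_trans x0_lt_z.
have [z /[!in_itv] /= /andP[x0_lt_z _] mvt] := MVT x0_lt g_der_in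
  (is_derive_continuous_itv (fun z x0_le => g_der z (lt_le_trans rho0_lt x0_le))).
have -> : g rho / rho - L = A / rho + (D z - L) * ((rho - x0) / rho).
  by rewrite /A -[g rho](subrK (g x0)) mvt; field; rewrite lt0r_neq0.
rewrite (_ : 2 * e = e + e); last by ring.
rewrite (le_trans (ler_normD _ _)) // lerD //.
  have : `|A| <= e * rho by rewrite -ler_pdivrMl //; lra.
  by rewrite normrM normfV (gtr0_norm rho_gt0) ler_pdivrMr // mulrC.
have Dz_close := D_close z (lt_trans rho0_lt x0_lt_z).
rewrite normrM -[leRHS]mulr1 ler_pM //.
by rewrite ger0_norm ?divr_ge0 ?ler_pdivrMr ?mul1r; lra.
Qed.

End DerivativeRatio.

Section Tortoise.
Context {R : realType}.
Variables (a : R) (f rstar : R -> R).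
Hypotheses (a_gt0 : 0 < a) (f_gt0 : forall x, 0 <= x < a -> 0 < f x)
  (rstar_der : forall r, a^-1 < r -> is_derive r 1 rstar (f r^-1)^-1).

Lemma rstar_nondecreasing x y : a^-1 < x -> x <= y -> rstar x <= rstar y.
Proof.
move=> ax; rewrite le_eqVlt => /predU1P[-> //|xy]; rewrite -subr_ge0.
have der_in z : z \in `]x, y[ -> is_derive z 1 rstar (f z^-1)^-1.
  by rewrite in_itv /= => /andP[xz _]; apply: rstar_der; exact: lt_trans xz.
have [z /[!in_itv] /= /andP[xz _] ->] := MVT xy der_in
  (is_derive_continuous_itv (fun z xz => rstar_der (lt_le_trans ax xz))).
have z_gt : a^-1 < z by exact: lt_trans xz.
have z_gt0 : 0 < z by apply: lt_trans z_gt; rewrite invr_gt0.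
rewrite mulr_ge0 ?subr_ge0 ?(ltW xy) // invr_ge0 ltW // f_gt0 //.
by rewrite invr_ge0 (ltW z_gt0) /= -(invrK a) ltf_pV2 ?posrE ?invr_gt0.
Qed.

Hypotheses (f_cont0 : right_cont_at0 f) (f0_gt0 : 0 < f 0).

Lemma rstar_ratio_asym eta : 0 < eta -> exists rho1, forall rho, rho1 <= rho ->
  `|rstar rho / rho - (f 0)^-1| <= eta /\ `|f rho^-1 - f 0| <= eta.
Proof.
move=> eta_gt0.
pose eps := Num.min eta (Num.min (f 0 / 2) (eta * f 0 ^+ 2 / 4)).
have eps_gt0 : 0 < eps by rewrite !lt_min eta_gt0 !divr_gt0 ?mulr_gt0 ?exprn_gt0.
have [eps_le_eta eps_le_half eps_le] :
    [/\ eps <= eta, eps <= f 0 / 2 & eps <= eta * f 0 ^+ 2 / 4].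
  by rewrite !ge_min !lexx !orbT.
have [d d_gt0 f_close] := f_cont0 eps_gt0.
pose rho0 := Num.max a^-1 d^-1.
have f_far z : rho0 < z -> `|f z^-1 - f 0| <= eps.
  rewrite gt_max => /andP[az dz]; apply: f_close.
  have z_gt0 : 0 < z by apply: lt_trans dz; rewrite invr_gt0.
  by rewrite invr_ge0 ltW //= -(invrK d) ltf_pV2 ?posrE ?invr_gt0.
have der_close z : rho0 < z -> `|(f z^-1)^-1 - (f 0)^-1| <= eta / 2.
  move=> /f_far fz; apply: le_trans (inv_dist_le f0_gt0 (le_trans fz eps_le_half)) _.
  rewrite ler_pdivrMr ?exprn_gt0 //; lra.
have der z : rho0 < z -> is_derive z 1 rstar (f z^-1)^-1.
  by rewrite gt_max => /andP[az _]; exact: rstar_der.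
have eta2_gt0 : 0 < eta / 2 by lra.
have [rho1 ratio_close] := derive_ratio_asym eta2_gt0 der der_close.
exists (Num.max rho1 (rho0 + 1)) => rho; rewrite ge_max => /andP[rho1_le rho0_le].
split; last by apply: le_trans eps_le_eta; apply: f_far; lra.
by have := ratio_close rho rho1_le; rewrite [2 * _]mulrC divfK.
Qed.

End Tortoise.

Lemma tortoise_flux_params {R : realType} (a : R) (f rstar : R -> R) :
  (forall r, a^-1 < r -> is_derive r 1 rstar (f r^-1)^-1) ->
  right_cont_at0 f -> 3 / 4 < f 0 ->
  exists2 mu, 0 < mu <= 2 / 3 & exists rho1, forall rho, rho1 <= rho ->
    rstar rho / rho <= 4 / 3 - mu /\ `|rstar rho / rho * f rho^-1 - 1| <= mu / 4.
Proof.
move=> rstar_der f_cont0 f0_gt.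
have f0_gt0 : 0 < f 0 by lra.
have k0_gt0 : 0 < (f 0)^-1 by rewrite invr_gt0.
have k0f0 : (f 0)^-1 * f 0 = 1 by rewrite mulVf // lt0r_neq0.
have k0_lt : (f 0)^-1 < 4 / 3 by nra.
have [mu mu_def] : exists mu, mu = (4 / 3 - (f 0)^-1) / 2 by eexists.
have mu_gt0 : 0 < mu by lra.
exists mu; first by apply/andP; split; lra.
have [eta [eta_gt0 eta_le_mu eta_le]] : exists eta,
    [/\ 0 < eta, eta <= mu & eta * (4 * (f 0 + 1 + (f 0)^-1)) <= mu].
  exists (Num.min mu (mu / (4 * (f 0 + 1 + (f 0)^-1)))).
  by rewrite lt_min -ler_pdivlMr ?ge_min ?lexx ?orbT ?mu_gt0 ?divr_gt0 //; lra.
have [rho1 asym] := rstar_ratio_asym rstar_der f_cont0 f0_gt0 eta_gt0.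
exists rho1 => rho /asym[k_close F_close]; split.
  by move: k_close; rewrite ler_norml => /andP[_]; lra.
have eta_le1 : eta <= 1 by lra.
have := mul_dist_le k_close F_close eta_le1.
rewrite k0f0 (gtr0_norm f0_gt0) (gtr0_norm k0_gt0) => prod_close.
by apply: le_trans prod_close _; lra.
Qed.

Section OnH.
Context {R : realType}.
Variables (a : R) (f rstar : R -> R) (mu rho1 : R).
Hypotheses (a_gt0 : 0 < a) (f_gt0 : forall x, 0 <= x < a -> 0 < f x)
  (rstar_der : forall r, a^-1 < r -> is_derive r 1 rstar (f r^-1)^-1)
  (mu_bounds : 0 < mu <= 2 / 3)
  (params : forall rho, rho1 <= rho ->
     rstar rho / rho <= 4 / 3 - mu /\ `|rstar rho / rho * f rho^-1 - 1| <= mu / 4).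

Lemma H_param_far (s u0 : R) (Rs : R -> R) (u : R) :
  0 < s <= 1 -> H_param a rstar s u0 Rs -> u0 < - (`|rstar rho1| + 1) -> u < u0 ->
  [/\ 0 < Rs u, rho1 <= (Rs u)^-1 & Rs u * - u = s * (rstar (Rs u)^-1 / (Rs u)^-1)].
Proof.
move=> /andP[s_gt0 s_le1]; rewrite /H_param gt_eqF // => HRs u0_lt u_lt.
have [/andP[r_gt0 r_lt_a] u_eq] := HRs u u_lt.
have rstar_eq : rstar (Rs u)^-1 = - u / s by rewrite [in RHS]u_eq; field; rewrite gt_eqF.
split => //; last by rewrite invrK rstar_eq; field; rewrite gt_eqF.
rewrite leNgt; apply/negP => rho_lt.
have a_lt : a^-1 < (Rs u)^-1 by rewrite ltf_pV2 ?posrE.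
have := rstar_nondecreasing a_gt0 f_gt0 rstar_der a_lt (ltW rho_lt).
have u_lt0 : u < 0 by have := normr_ge0 (rstar rho1); lra.
have : - u <= - u / s by rewrite ler_pdivlMr //; nra.
have := ler_norm (rstar rho1).
lra.
Qed.

Lemma dens_bounds_on_H (s u0 : R) (Rs : R -> R) (u X Y g : R) : 0 <= s <= 1 ->
  H_param a rstar s u0 Rs -> u0 < - (`|rstar rho1| + 1) -> u < u0 -> 0 <= g ->
  [/\ 0 <= I_dens u (Rs u) X Y g,
      mu / 15 * I_dens u (Rs u) X Y g <= E_dens f s u (Rs u) X Y g
    & E_dens f s u (Rs u) X Y g <= 5 * I_dens u (Rs u) X Y g].
Proof.
move=> /andP[s_ge0 s_le1] HRs u0_lt u_lt g_ge0.
have [mu_gt0 mu_le] := andP mu_bounds.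
have u_lt0 : u < 0 by have := normr_ge0 (rstar rho1); lra.
have [s0|s_neq0] := eqVneq s 0.
  subst s; move: HRs; rewrite /H_param eqxx => /(_ u u_lt) ->.
  have I_ge0 := I_dens_ge0 u X Y (lexx 0) g_ge0.
  rewrite /E_dens eqxx /I_dens mul0r mul0r addr0 in I_ge0 *.
  by split; nra.
have s_gt0 : 0 < s by rewrite lt0r s_neq0.
have s_in : 0 < s <= 1 by rewrite s_gt0.
have [r_gt0 rho1_le ru] := H_param_far s_in HRs u0_lt u_lt.
have [k_le p_close] := params rho1_le; rewrite [X in f X]invrK in p_close.
move: ru k_le p_close; set k := rstar (Rs u)^-1 / (Rs u)^-1 => ru k_le p_close.
have k_gt0 : 0 < k.
  by rewrite -(pmulr_rgt0 _ s_gt0) -ru mulr_gt0 // oppr_gt0.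
have adm : flux_admissible s k (k * f (Rs u)) mu.
  by split; rewrite ?s_gt0 ?s_le1 ?k_gt0 ?k_le ?mu_gt0 ?mu_le.
have I_ge0 := I_dens_ge0 u X Y (ltW r_gt0) g_ge0.
rewrite (E_dens_flux_form f X Y g s_neq0 u_lt0 ru) (I_dens_ref_form X Y g u_lt0 ru) in I_ge0 *.
by split; [|apply: (flux_form_lb adm) | apply: (flux_form_ub adm)].
Qed.

End OnH.

Unset Implicit Arguments.

Theorem proposition2 (R : realType) (a : R) (f : R -> R) (rstar : R -> R) :
  0 < a ->
  (forall x, 0 <= x < a -> 0 < f x) ->
  analytic_on_0a f a ->
  (forall r, a^-1 < r -> is_derive r 1 rstar (f r^-1)^-1) ->
  3 / 4 < f 0 ->
  exists U : R, U < 0 /\ exists c C : R, 0 < c /\ c <= C /\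
    forall (u0 s : R) (Rs : R -> R) (phi : 'rV[R]_5 -> R),
      u0 < U -> 0 <= s <= 1 ->
      H_param a rstar s u0 Rs ->
      smooth phi ->
      ((c%:E * I_norm u0 Rs phi <= energy f s u0 Rs phi)%E /\
       (energy f s u0 Rs phi <= C%:E * I_norm u0 Rs phi)%E).
Proof.
move=> a_gt0 f_gt0 f_analytic rstar_der f0_gt.
have [mu mu_in [rho1 params]] := tortoise_flux_params rstar_der
  (analytic_on_0a_right_cont0 a_gt0 f_analytic) f0_gt.
have /andP[mu_gt0 mu_le] := mu_in.
exists (- (`|rstar rho1| + 1)); split; first by have := normr_ge0 (rstar rho1); lra.
exists (mu / 15), 5; split; first lra; split; first lra.
(* The comparison is pointwise. *)
move=> u0 s Rs phi u0_lt s_in HRs _.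
apply: int_u_S2_sandwich; [lra | lra | move=> u w1 w2 w3 u_lt w_unit].
apply: (dens_bounds_on_H a_gt0 f_gt0 rstar_der mu_in params) s_in HRs u0_lt u_lt _.
exact: grad_S2_sq_ge0.
Qed.
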